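(* (1) For all terms $t,s$, variable $x$ and type $A$: if $t,s\in\mathrm{SN}$ and $t\{x:=s\}\in[\![A]\!]$, then $(\lambda x.t)s\in[\![A]\!]$. (2) For all terms $t_1,t_2$ and types $A_1,A_2$: if $t_1\in[\![A_1]\!]$ and $t_2\in[\![A_2]\!]$, then $\pi_i\langle t_1,t_2\rangle\in[\![A_i]\!]$ for $i=1,2$.
   Context: Terms: $t,s,u ::= x \mid \lambda x.t \mid ts \mid \langle t,s\rangle \mid \pi_1 t \mid \pi_2 t$ (up to $\alpha$-renaming); $t\{x:=s\}$ is capture-avoiding substitution. Top-level rules: $(\lambda x.t)s \mapsto t\{x:=s\}$; $\pi_i\langle t_1,t_2\rangle \mapsto t_i$ ($i=1,2$); $\langle t,s\rangle u \mapsto \langle tu, su\rangle$; $\pi_i(\lambda x.t)\mapsto \lambda x.\pi_i t$ ($i=1,2$); $\to_{\mathsf{dist}}$ is the closure of these rules under all term constructors. $\mathrm{SN}$ is the set of strongly normalizing terms for $\to_{\mathsf{dist}}$. Types: $A ::= \tau \mid A\Rightarrow A \mid A\wedge A$. Interpretation: $[\![\tau]\!]=\mathrm{SN}$; $[\![A\Rightarrow B]\!]=\{t\mid \forall s\in[\![A]\!],\ ts\in[\![B]\!]\}$; $[\![A\wedge B]\!]=\{t\mid \pi_1t\in[\![A]\!]\text{ and }\pi_2 t\in[\![B]\!]\}$. *)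

(* Lambda-terms with pairs, de Bruijn indices (alpha-equivalence built in). *)
From Stdlib Require Import Arith.

Inductive term : Type :=
  | var  : nat -> term
  | lam  : term -> term
  | app  : term -> term -> term
  | pair : term -> term -> term
  | proj1 : term -> term
  | proj2 : term -> term.

Fixpoint lift (k c : nat) (t : term) : term :=
  match t with
  | var n => if c <=? n then var (n + k) else var n
  | lam t => lam (lift k (S c) t)
  | app t s => app (lift k c t) (lift k c s)
  | pair t s => pair (lift k c t) (lift k c s)
  | proj1 t => proj1 (lift k c t)
  | proj2 t => proj2 (lift k c t)
  end.

(* subst t j s : capture-avoiding substitution of s for index j in t,
   decrementing the free indices above j (the binder is removed). *)
Fixpoint subst (t : term) (j : nat) (s : term) : term :=
  match t with
  | var n => if n =? j then s else if j <? n then var (pred n) else var n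
  | lam t => lam (subst t (S j) (lift 1 0 s))
  | app t u => app (subst t j s) (subst u j s)
  | pair t u => pair (subst t j s) (subst u j s)
  | proj1 t => proj1 (subst t j s)
  | proj2 t => proj2 (subst t j s)
  end.

Inductive step : term -> term -> Prop :=
  | st_beta  : forall t s, step (app (lam t) s) (subst t 0 s)
  | st_pi1   : forall t1 t2, step (proj1 (pair t1 t2)) t1
  | st_pi2   : forall t1 t2, step (proj2 (pair t1 t2)) t2
  | st_pairapp : forall t s u, step (app (pair t s) u) (pair (app t u) (app s u))
  | st_pi1lam : forall t, step (proj1 (lam t)) (lam (proj1 t))
  | st_pi2lam : forall t, step (proj2 (lam t)) (lam (proj2 t))
  | st_lam   : forall t t', step t t' -> step (lam t) (lam t')
  | st_appl  : forall t t' s, step t t' -> step (app t s) (app t' s)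
  | st_appr  : forall t s s', step s s' -> step (app t s) (app t s')
  | st_pairl : forall t t' s, step t t' -> step (pair t s) (pair t' s)
  | st_pairr : forall t s s', step s s' -> step (pair t s) (pair t s')
  | st_proj1 : forall t t', step t t' -> step (proj1 t) (proj1 t')
  | st_proj2 : forall t t', step t t' -> step (proj2 t) (proj2 t').

Definition SN (t : term) : Prop := Acc (fun u v => step v u) t.

Inductive ty : Type :=
  | base  : nat -> ty
  | arrow : ty -> ty -> ty
  | conj  : ty -> ty -> ty.

Fixpoint interp (A : ty) : term -> Prop :=
  match A with
  | base _ => SN
  | arrow A B => fun t => forall s, interp A s -> interp B (app t s)
  | conj A B => fun t => interp A (proj1 t) /\ interp B (proj2 t)
  end.

(* Girard's reducibility candidates: every [interp A] consists of strongly
   normalizing terms, is closed under reduction, and contains every neutral term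
   (neither an abstraction nor a pair) all of whose reducts it contains.  Neutral
   terms are never the head of an [app] or [proj] redex, so the distributive rules
   do not disturb this.  The redexes [(\x.t) s] and [pi_i <t1,t2>] are neutral, so
   they lie in a candidate once all their reducts do: the contractum by hypothesis,
   the others by well-founded induction on the strong normalization of the
   components.  In the beta case [s -> s'] only gives [t{s} ->* t{s'}], hence the
   need for closure under [->*]. *)
From Stdlib Require Import Arith Lia.

Ltac index_cases := repeat (cbn [lift subst]; match goal with
  | |- context [?a <=? ?b] => destruct (Nat.leb_spec a b)
  | |- context [?a <? ?b] => destruct (Nat.ltb_spec a b)
  | |- context [?a =? ?b] => destruct (Nat.eqb_spec a b)
  end); try (f_equal; lia); try lia.

Lemma lift_lift t k k' c c' : c' <= c ->
  lift k' c' (lift k c t) = lift k (c + k') (lift k' c' t).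
Proof.
  revert k k' c c'.
  induction t; intros k k' c c' Hc; cbn [lift];
    try (f_equal; auto; fail).
  - index_cases.
  - f_equal. rewrite IHt by lia. reflexivity.
Qed.

Lemma shift_lift s k c : lift 1 0 (lift k c s) = lift k (S c) (lift 1 0 s).
Proof. rewrite lift_lift by lia. f_equal; lia. Qed.

Lemma lift_subst_above t j s k c : j <= c ->
  lift k c (subst t j s) = subst (lift k (S c) t) j (lift k c s).
Proof.
  revert j s k c.
  induction t; intros j s k c Hj; cbn [lift subst];
    try (f_equal; auto; fail).
  - index_cases.
  - f_equal. rewrite IHt, shift_lift by lia. reflexivity.
Qed.

Lemma lift_subst_below t j s k c : c <= j ->
  lift k c (subst t j s) = subst (lift k c t) (j + k) (lift k c s).
Proof.
  revert j s k c.
  induction t; intros j s k c Hj; cbn [lift subst];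
    try (f_equal; auto; fail).
  - index_cases.
  - f_equal. rewrite IHt, shift_lift by lia. reflexivity.
Qed.

Lemma subst_lift t i u : subst (lift 1 i t) i u = t.
Proof.
  revert i u.
  induction t; intros i u; cbn [lift subst];
    try (f_equal; auto; fail).
  index_cases.
Qed.

Lemma subst_subst t i j u s : i <= j ->
  subst (subst t i u) j s = subst (subst t (S j) (lift 1 i s)) i (subst u j s).
Proof.
  revert i j u s.
  induction t; intros i j u s Hij; cbn [subst];
    try (f_equal; auto; fail).
  - index_cases. symmetry. apply subst_lift.
  - f_equal. rewrite IHt by lia. f_equal.
    + f_equal. rewrite (lift_lift s 1 1 i 0) by lia. f_equal; lia.
    + rewrite lift_subst_below by lia. f_equal; lia.
Qed.

Lemma step_lift t t' k c : step t t' -> step (lift k c t) (lift k c t').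
Proof.
  intros Hstep. revert k c.
  induction Hstep; intros k c; cbn [lift]; try (constructor; auto).
  rewrite lift_subst_above by lia. constructor.
Qed.

Lemma step_subst t t' j s : step t t' -> step (subst t j s) (subst t' j s).
Proof.
  intros Hstep. revert j s.
  induction Hstep; intros j w; cbn [subst]; try (constructor; auto).
  rewrite (subst_subst t 0 j s w) by lia. constructor.
Qed.

Inductive star : term -> term -> Prop :=
  | star_refl t : star t t
  | star_step t u v : step t u -> star u v -> star t v.

Lemma star_trans t u v : star t u -> star u v -> star t v.
Proof. induction 1; intros; [assumption | econstructor; eauto]. Qed.

Lemma star_cong (f : term -> term) :
  (forall a b, step a b -> step (f a) (f b)) -> forall a b, star a b -> star (f a) (f b).
Proof. intros Hf a b Hab. induction Hab; econstructor; eauto. Qed.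

Lemma star_cong2 (f : term -> term -> term) :
  (forall a a' b, step a a' -> step (f a b) (f a' b)) ->
  (forall a b b', step b b' -> step (f a b) (f a b')) ->
  forall a a' b b', star a a' -> star b b' -> star (f a b) (f a' b').
Proof.
  intros Hl Hr a a' b b' Ha Hb. apply star_trans with (f a' b).
  - apply (star_cong (fun x => f x b)); auto.
  - apply (star_cong (f a')); auto.
Qed.

Lemma subst_star t j s s' : step s s' -> star (subst t j s) (subst t j s').
Proof.
  revert j s s'.
  induction t; intros j s s' Hs; cbn [subst].
  - destruct (n =? j); [econstructor; [eassumption | constructor] |].
    destruct (j <? n); constructor.
  - apply star_cong; [constructor; assumption |].
    apply IHt, step_lift, Hs.
  - apply star_cong2; auto using step.
  - apply star_cong2; auto using step.
  - apply star_cong; auto using step.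
  - apply star_cong; auto using step.
Qed.

Lemma SN_preimage (f : term -> term) :
  (forall a b, step a b -> step (f a) (f b)) -> forall t, SN (f t) -> SN t.
Proof.
  intros Hf t Hsn. remember (f t) as u eqn:Hu. revert t Hu.
  induction Hsn as [u _ IH]; intros t Hu; subst u.
  constructor. intros t' Hstep. eapply IH; [apply Hf, Hstep | reflexivity].
Qed.

Definition neutral (t : term) : Prop :=
  match t with lam _ | pair _ _ => False | _ => True end.

Record candidate (P : term -> Prop) : Prop := {
  candidate_SN : forall t, P t -> SN t;
  candidate_step : forall t t', P t -> step t t' -> P t';
  candidate_neutral : forall t, neutral t -> (forall t', step t t' -> P t') -> P t }.

Lemma candidate_var P n : candidate P -> P (var n).
Proof.
  intros HP. apply (candidate_neutral P HP); [exact I |].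
  intros t' Hstep. inversion Hstep.
Qed.

Lemma candidate_star P t t' : candidate P -> star t t' -> P t -> P t'.
Proof.
  intros HP Hstar. induction Hstar; intros Ht; auto.
  apply IHHstar. eapply candidate_step; eassumption.
Qed.

Lemma SN_candidate : candidate SN.
Proof.
  split.
  - auto.
  - intros t t' Ht Hstep. exact (Acc_inv Ht Hstep).
  - intros t _ Hreducts. constructor. exact Hreducts.
Qed.

Lemma candidate_arrow P Q : candidate P -> candidate Q ->
  candidate (fun t => forall s, P s -> Q (app t s)).
Proof.
  intros HP HQ. split.
  - intros t Ht. apply (SN_preimage (fun u => app u (var 0))); [constructor; assumption |].
    apply (candidate_SN Q HQ), Ht, candidate_var, HP.
  - intros t t' Ht Hstep s Hs.
    apply (candidate_step Q HQ (app t s)); [apply Ht, Hs | constructor; assumption].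
  - intros t Hneutral Hreducts s Hs.
    assert (Hsn : SN s) by exact (candidate_SN P HP s Hs).
    induction Hsn as [s _ IHs].
    apply (candidate_neutral Q HQ); [exact I |].
    (* [t] is neutral, so the only reducts of [app t s] are [app t' s] and [app t s']. *)
    intros u Hstep. inversion Hstep; subst; try contradiction.
    + apply Hreducts; assumption.
    + apply IHs; [assumption |]. eapply candidate_step; eassumption.
Qed.

Lemma candidate_conj P Q : candidate P -> candidate Q ->
  candidate (fun t => P (proj1 t) /\ Q (proj2 t)).
Proof.
  intros HP HQ. split.
  - intros t [Ht _]. apply (SN_preimage proj1); [constructor; assumption |].
    exact (candidate_SN P HP _ Ht).
  - intros t t' [H1 H2] Hstep. split.
    + eapply (candidate_step P HP); [exact H1 | constructor; assumption].
    + eapply (candidate_step Q HQ); [exact H2 | constructor; assumption].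
  - intros t Hneutral Hreducts. split.
    + apply (candidate_neutral P HP); [exact I |].
      intros u Hstep. inversion Hstep; subst; try contradiction.
      apply Hreducts; assumption.
    + apply (candidate_neutral Q HQ); [exact I |].
      intros u Hstep. inversion Hstep; subst; try contradiction.
      apply Hreducts; assumption.
Qed.

Lemma interp_candidate A : candidate (interp A).
Proof.
  induction A; cbn [interp].
  - exact SN_candidate.
  - apply candidate_arrow; assumption.
  - apply candidate_conj; assumption.
Qed.

Lemma step_beta_redex_inv t s u : step (app (lam t) s) u ->
  u = subst t 0 s \/
  (exists t', step t t' /\ u = app (lam t') s) \/
  (exists s', step s s' /\ u = app (lam t) s').
Proof.
  intros Hstep. inversion Hstep; subst.
  - left. reflexivity.
  - match goal with H : step (lam _) _ |- _ => inversion H; subst end.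
    right; left. eauto.
  - right; right. eauto.
Qed.

Lemma step_proj1_pair_inv t1 t2 u : step (proj1 (pair t1 t2)) u ->
  u = t1 \/
  (exists t1', step t1 t1' /\ u = proj1 (pair t1' t2)) \/
  (exists t2', step t2 t2' /\ u = proj1 (pair t1 t2')).
Proof.
  intros Hstep. inversion Hstep; subst.
  - left. reflexivity.
  - match goal with H : step (pair _ _) _ |- _ => inversion H; subst end;
      right; [left | right]; eauto.
Qed.

Lemma step_proj2_pair_inv t1 t2 u : step (proj2 (pair t1 t2)) u ->
  u = t2 \/
  (exists t1', step t1 t1' /\ u = proj2 (pair t1' t2)) \/
  (exists t2', step t2 t2' /\ u = proj2 (pair t1 t2')).
Proof.
  intros Hstep. inversion Hstep; subst.
  - left. reflexivity.
  - match goal with H : step (pair _ _) _ |- _ => inversion H; subst end;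
      right; [left | right]; eauto.
Qed.

Lemma candidate_beta_expansion P t s : candidate P ->
  SN t -> SN s -> P (subst t 0 s) -> P (app (lam t) s).
Proof.
  intros HP Ht. revert s.
  induction Ht as [t _ IHt]. intros s Hs.
  induction Hs as [s Hs IHs]. intros Hcontractum.
  apply (candidate_neutral P HP); [exact I |].
  intros u Hstep.
  destruct (step_beta_redex_inv t s u Hstep) as [-> | [[t' [Ht' ->]] | [s' [Hs' ->]]]].
  - exact Hcontractum.
  - apply IHt; [assumption | constructor; assumption |].
    eapply candidate_step; [exact HP | exact Hcontractum | apply step_subst, Ht'].
  - apply IHs; [assumption |].
    eapply candidate_star; [exact HP | apply subst_star, Hs' | exact Hcontractum].
Qed.

Lemma candidate_proj1_expansion P t1 t2 : candidate P ->
  SN t1 -> SN t2 -> P t1 -> P (proj1 (pair t1 t2)).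
Proof.
  intros HP H1. revert t2.
  induction H1 as [t1 _ IH1]. intros t2 H2.
  induction H2 as [t2 H2 IH2]. intros Ht1.
  apply (candidate_neutral P HP); [exact I |].
  intros u Hstep.
  destruct (step_proj1_pair_inv t1 t2 u Hstep) as [-> | [[t1' [Ht1' ->]] | [t2' [Ht2' ->]]]].
  - exact Ht1.
  - apply IH1; [assumption | constructor; assumption |].
    eapply candidate_step; eassumption.
  - apply IH2; assumption.
Qed.

Lemma candidate_proj2_expansion P t1 t2 : candidate P ->
  SN t1 -> SN t2 -> P t2 -> P (proj2 (pair t1 t2)).
Proof.
  intros HP H1. revert t2.
  induction H1 as [t1 _ IH1]. intros t2 H2.
  induction H2 as [t2 H2 IH2]. intros Ht2.
  apply (candidate_neutral P HP); [exact I |].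
  intros u Hstep.
  destruct (step_proj2_pair_inv t1 t2 u Hstep) as [-> | [[t1' [Ht1' ->]] | [t2' [Ht2' ->]]]].
  - exact Ht2.
  - apply IH1; [assumption | constructor; assumption | assumption].
  - apply IH2; [assumption |]. eapply candidate_step; eassumption.
Qed.

Theorem lemma6 :
  (forall (t s : term) (A : ty),
      SN t -> SN s -> interp A (subst t 0 s) -> interp A (app (lam t) s)) /\
  (forall (t1 t2 : term) (A1 A2 : ty),
      interp A1 t1 -> interp A2 t2 ->
      interp A1 (proj1 (pair t1 t2)) /\ interp A2 (proj2 (pair t1 t2))).
Proof.
  split.
  - intros t s A. apply candidate_beta_expansion, interp_candidate.
  - intros t1 t2 A1 A2 H1 H2.
    pose proof (candidate_SN _ (interp_candidate A1) t1 H1) as Hsn1.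
    pose proof (candidate_SN _ (interp_candidate A2) t2 H2) as Hsn2.
    split.
    + apply candidate_proj1_expansion; auto using interp_candidate.
    + apply candidate_proj2_expansion; auto using interp_candidate.
Qed.
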